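(* Let $H$ be a real or complex Hilbert space of dimension $n$, let $N\ge n$, let $F=\{f_i\}_{i=1}^N$ be a frame for $H$ with frame operator $S_F$, and let $\{q_i\}_{i=1}^N$ be a weight number sequence. Set $c=\max\{q_i\|f_i\|\,\|S_F^{-1}f_i\|:1\le i\le N\}$, $\varrho_1=\{i:q_i\|f_i\|\,\|S_F^{-1}f_i\|=c\}$, $\varrho_2=\{1,\dots,N\}\setminus\varrho_1$, and $H_j=\operatorname{span}\{f_i:i\in\varrho_j\}$ for $j=1,2$. Suppose $H_1\cap H_2=\{0\}$ and $\{f_i:i\in\varrho_2\}$ is linearly independent. Then the canonical dual $\{S_F^{-1}f_i\}_{i=1}^N$ is the unique 1-erasure probabilistic optimal dual of $F$, and therefore it is an $m$-erasure probabilistic optimal dual of $F$ for every $m$.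
   Context: Inner products are linear in the first argument. A frame for $H$ is a finite sequence spanning $H$. Analysis operator: $\Theta_F f=(\langle f,f_i\rangle)_i$. Synthesis operator: $\Theta_G^*(c)=\sum_ic_ig_i$. Frame operator: $S_F=\Theta_F^*\Theta_F$. A dual of $F$ is a frame $G=\{g_i\}_{i=1}^N$ with $f=\sum_i\langle f,f_i\rangle g_i=\sum_i\langle f,g_i\rangle f_i$ for all $f$. A probability sequence satisfies $0\le p_i\le1$ and $\sum p_i=1$. Weight numbers: $q_i=\frac{\sum_jp_j}{\sum_jp_j-p_i}\cdot\frac{N-1}{n}$ (assumed well defined). For $1\le m\le N$, $\mathcal{D}_m^p$ is the set of $N\times N$ diagonal matrices $D$ for which there is $\Lambda$ with $|\Lambda|=m$, $D_{ii}=q_i$ for $i\in\Lambda$ and $0$ otherwise. $d_m^p(F,G)=\max\{\|\Theta_G^*D\Theta_F\|:D\in\mathcal{D}_m^p\}$ (operator norm). Optimal duals are defined recursively: - $G$ is a 1-erasure probabilistic optimal dual of $F$ if $d_1^p(F,G)=\mu_1(F):=\inf\{d_1^p(F,G'):G'\text{ a dual of }F\}$; - for $m\ge2$, $G$ is an $m$-erasure probabilistic optimal dual of $F$ if it is an $(m-1)$-erasure probabilistic optimal dual and $d_m^p(F,G)=\mu_m(F):=\inf\{d_m^p(F,G'):G'\text{ an }(m-1)\text{-erasure probabilistic optimal dual of }F\}$. *)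

From HB Require Import structures.
From mathcomp Require Import all_boot all_order all_algebra.
From mathcomp Require Import classical_sets reals.
From mathcomp Require Import complex.

Set Implicit Arguments.
Unset Strict Implicit.
Unset Printing Implicit Defensive.

Import Order.TTheory GRing.Theory Num.Theory.
Local Open Scope ring_scope.

(* Finite frames in H = K^n (column vectors 'cV[K]_n), where the scalar
   field K is either R (real case) or R[i] (complex case).  The generic
   definitions below are parameterized by:
     cj  : K -> K   conjugation (identity for R, conjc for R[i]),
     toR : K -> R   real part (identity for R, Re for R[i]),
     ofR : R -> K   embedding of reals into K.
   Inner product <x, y> = sum_k x_k * cj (y_k), linear in the first argument. *)

Section Frames.
Variables (R : realType) (K : numFieldType).
Variables (cj : K -> K) (toR : K -> R) (ofR : R -> K).
Variables (n N : nat).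

Definition vec := 'cV[K]_n.
Definition fseq := 'I_N -> vec.

Definition inner (x y : vec) : K := \sum_(k < n) x k 0 * cj (y k 0).

Definition vnorm (x : vec) : R := Num.sqrt (toR (inner x x)).

Definition opnorm (A : 'M[K]_n) : R :=
  sup [set vnorm (A *m x) | x in [set x : vec | vnorm x <= 1]]%classic.

Definition in_span (f : fseq) (S : {set 'I_N}) (x : vec) : Prop :=
  exists c : 'I_N -> K, x = \sum_(i in S) c i *: f i.

Definition is_frame (f : fseq) : Prop := forall x : vec, in_span f [set: 'I_N] x.

Definition lin_indep (f : fseq) (S : {set 'I_N}) : Prop :=
  forall c : 'I_N -> K, \sum_(i in S) c i *: f i = 0 -> forall i, i \in S -> c i = 0.

(* analysis operator Theta_F : H -> K^N, (Theta_F x)_i = <x, f_i> *)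
Definition analysis (f : fseq) : 'M[K]_(N, n) := \matrix_(i, k) cj (f i k 0).
Definition synthesis (g : fseq) : 'M[K]_(n, N) := \matrix_(k, i) g i k 0.
Definition frame_op (f : fseq) : 'M[K]_n := synthesis f *m analysis f.
Definition canonical_dual (f : fseq) : fseq := fun i => invmx (frame_op f) *m f i.

Definition is_dual (f g : fseq) : Prop :=
  is_frame g /\
  forall x : vec, x = \sum_i inner x (f i) *: g i /\ x = \sum_i inner x (g i) *: f i.

Definition prob_seq (p : 'I_N -> R) : Prop :=
  (forall i, 0 <= p i <= 1) /\ \sum_i p i = 1.

Definition weight (p : 'I_N -> R) (i : 'I_N) : R :=
  (\sum_j p j) / (\sum_j p j - p i) * ((N - 1)%:R / n%:R).

Definition Dmat (p : 'I_N -> R) (L : {set 'I_N}) : 'M[K]_N :=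
  \matrix_(i, j) (if (i == j) && (i \in L) then ofR (weight p i) else 0).

Definition dmp (p : 'I_N -> R) (m : nat) (f g : fseq) : R :=
  \big[Num.max/0]_(L : {set 'I_N} | #|L| == m)
     opnorm (synthesis g *m Dmat p L *m analysis f).

Fixpoint opt_dual (p : 'I_N -> R) (m : nat) (f g : fseq) : Prop :=
  match m with
  | 0 => is_dual f g
  | m'.+1 =>
      opt_dual p m' f g /\
      dmp p m'.+1 f g = inf [set dmp p m'.+1 f g' | g' in [set g' | opt_dual p m' f g']]%classic
  end.

End Frames.

Definition cor41_stmt (R : realType) (K : numFieldType)
  (cj : K -> K) (toR : K -> R) (ofR : R -> K) : Prop :=
  forall (n N : nat) (f : fseq K n N) (p : 'I_N -> R),
    (n <= N)%N ->
    is_frame f ->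
    prob_seq p ->
    (forall i, \sum_j p j - p i != 0) ->
    let cf := fun i => weight n p i * vnorm cj toR (f i)
                         * vnorm cj toR (canonical_dual cj f i) in
    let c := \big[Num.max/0]_i cf i in
    let rho1 := [set i | cf i == c] in
    let rho2 := ~: rho1 in
    (forall x, in_span f rho1 x -> in_span f rho2 x -> x = 0) ->
    lin_indep f rho2 ->
    (opt_dual cj toR ofR p 1 f (canonical_dual cj f) /\
     (forall g, opt_dual cj toR ofR p 1 f g -> g = canonical_dual cj f)) /\
    (forall m, (1 <= m <= N)%N -> opt_dual cj toR ofR p m f (canonical_dual cj f)).

From HB Require Import structures.
From mathcomp Require Import all_boot all_order all_algebra.
From mathcomp Require Import classical_sets reals.
From mathcomp Require Import ring lra zify.
Import Order.TTheory GRing.Theory Num.Theory.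
(* After Num.Theory, so that [Re] is the real part of [R[i]]. *)
From mathcomp Require Import complex.

Set Implicit Arguments.
Unset Strict Implicit.
Unset Printing Implicit Defensive.

Local Open Scope ring_scope.

(* Let h = {S^-1 f_i} be the canonical dual.  The rank-one operator
   Theta_G^* D_{i} Theta_F : x |-> q_i <x, f_i> g_i has norm q_i |f_i| |g_i|, so
   d_1(F, G) = max_i q_i |f_i| |g_i| and d_1(F, h) = c.  Let g be a dual with
   d_1(F, g) <= c and u = g - h.  As g and h are both duals,
   sum_i <x, u_i> f_i = 0 for every x; splitting this sum along rho1 and rho2,
   H_1 /\ H_2 = 0 and the independence of {f_i : i in rho2} give u_i = 0 on
   rho2.  On rho1, q_i |f_i| |g_i| <= c = q_i |f_i| |h_i| gives
   |h_i + u_i| <= |h_i| (this needs c > 0, which holds unless n = 0 or N = 1,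
   where the dual is unique anyway).  Finally sum_i <h_i, u_i> is the trace
   of Theta_u S^-1 Theta_F^* and hence 0, so summing
   |h_i + u_i|^2 <= |h_i|^2 yields sum_i |u_i|^2 <= 0, i.e. g = h.  Thus h is
   the only dual minimising d_1, and the recursive definition then makes it
   the only m-erasure optimal dual for every m. *)

Section ScalarField.
Variables (R : realType) (K : numFieldType).
Variables (cj : K -> K) (toR : K -> R) (ofR : R -> K).
Hypothesis cjD : forall x y, cj (x + y) = cj x + cj y.
Hypothesis cjM : forall x y, cj (x * y) = cj x * cj y.
Hypothesis cjK : forall x, cj (cj x) = x.
Hypothesis ofRD : forall a b, ofR (a + b) = ofR a + ofR b.
Hypothesis ofRM : forall a b, ofR (a * b) = ofR a * ofR b.
Hypothesis ofR1 : ofR 1 = 1.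
Hypothesis cj_ofR : forall a, cj (ofR a) = ofR a.
Hypothesis toRD : forall x y, toR (x + y) = toR x + toR y.
Hypothesis toR_ofR : forall a, toR (ofR a) = a.
Hypothesis toR_ofRM : forall a x, toR (ofR a * x) = a * toR x.
Hypothesis mul_cj_real : forall x, x * cj x = ofR (toR (x * cj x)).
Hypothesis toR_mul_cj_ge0 : forall x, 0 <= toR (x * cj x).
Hypothesis toR_mul_cj_eq0 : forall x, toR (x * cj x) = 0 -> x = 0.

Lemma cj0 : cj 0 = 0.
Proof. by apply/(addrI (cj 0)); rewrite -cjD !addr0. Qed.

Lemma cjN x : cj (- x) = - cj x.
Proof. by apply/(addrI (cj x)); rewrite -cjD !subrr cj0. Qed.

Lemma cjB x y : cj (x - y) = cj x - cj y.
Proof. by rewrite cjD cjN. Qed.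

Lemma cj1 : cj 1 = 1.
Proof. by rewrite -ofR1 cj_ofR. Qed.

Lemma toR0 : toR 0 = 0.
Proof. by apply/(addrI (toR 0)); rewrite -toRD !addr0. Qed.

Lemma ofR0 : ofR 0 = 0.
Proof. by apply/(addrI (ofR 0)); rewrite -ofRD !addr0. Qed.

Lemma ofRN a : ofR (- a) = - ofR a.
Proof. by apply/(addrI (ofR a)); rewrite -ofRD !subrr ofR0. Qed.

Lemma cj_sum (I : Type) (r : seq I) (P : pred I) (F : I -> K) :
  cj (\sum_(i <- r | P i) F i) = \sum_(i <- r | P i) cj (F i).
Proof. exact: (big_morph cj cjD cj0). Qed.

Lemma toR_sum (I : Type) (r : seq I) (P : pred I) (F : I -> K) :
  toR (\sum_(i <- r | P i) F i) = \sum_(i <- r | P i) toR (F i).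
Proof. exact: (big_morph toR toRD toR0). Qed.

Lemma ofR_sum (I : Type) (r : seq I) (P : pred I) (F : I -> R) :
  ofR (\sum_(i <- r | P i) F i) = \sum_(i <- r | P i) ofR (F i).
Proof. exact: (big_morph ofR ofRD ofR0). Qed.

Section InnerProduct.
Variable n : nat.
Local Notation vec := (vec K n).
Local Notation inner := (@inner K cj n).
Local Notation vnorm := (@vnorm R K cj toR n).

Definition nrm2 (x : vec) : R := toR (inner x x).

Lemma vnormE x : vnorm x = Num.sqrt (nrm2 x).
Proof. by []. Qed.

Lemma innerC x y : inner y x = cj (inner x y).
Proof. by rewrite /inner cj_sum; apply: eq_bigr => k _; rewrite cjM cjK mulrC. Qed.

Lemma innerDl x y z : inner (x + y) z = inner x z + inner y z.
Proof. by rewrite /inner -big_split; apply: eq_bigr => k _; rewrite mxE mulrDl. Qed.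

Lemma innerZl a x y : inner (a *: x) y = a * inner x y.
Proof. by rewrite /inner mulr_sumr; apply: eq_bigr => k _; rewrite mxE mulrA. Qed.

Lemma inner0l y : inner 0 y = 0.
Proof. by rewrite /inner big1 // => k _; rewrite mxE mul0r. Qed.

Lemma innerBl x y z : inner (x - y) z = inner x z - inner y z.
Proof. by rewrite -scaleN1r innerDl innerZl mulN1r. Qed.

Lemma innerDr x y z : inner z (x + y) = inner z x + inner z y.
Proof. by rewrite innerC innerDl cjD -!innerC. Qed.

Lemma innerBr x y z : inner z (x - y) = inner z x - inner z y.
Proof. by rewrite innerC innerBl cjB -!innerC. Qed.

Lemma innerZr a x y : inner y (a *: x) = cj a * inner y x.
Proof. by rewrite innerC innerZl cjM -innerC. Qed.

Lemma inner0r y : inner y 0 = 0.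
Proof. by rewrite innerC inner0l cj0. Qed.

Lemma inner_suml (I : Type) (r : seq I) (P : pred I) (F : I -> vec) y :
  inner (\sum_(i <- r | P i) F i) y = \sum_(i <- r | P i) inner (F i) y.
Proof. exact: (big_morph (inner^~ y) (fun a b => innerDl a b y) (inner0l y)). Qed.

Lemma inner_self x : inner x x = ofR (nrm2 x).
Proof.
by rewrite /nrm2 /inner toR_sum ofR_sum; apply: eq_bigr => k _; apply: mul_cj_real.
Qed.

Lemma nrm2_ge0 x : 0 <= nrm2 x.
Proof. by rewrite /nrm2 /inner toR_sum; apply: sumr_ge0 => k _; apply: toR_mul_cj_ge0. Qed.

Lemma nrm2_eq0 x : nrm2 x = 0 -> x = 0.
Proof.
rewrite /nrm2 /inner toR_sum => /psumr_eq0P eq0.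
apply/matrixP => k j; rewrite (ord1 j) mxE; apply: toR_mul_cj_eq0.
by apply: eq0 => // l _; apply: toR_mul_cj_ge0.
Qed.

Lemma nrm20 : nrm2 0 = 0.
Proof. by rewrite /nrm2 inner0l toR0. Qed.

Lemma nrm2Z a x : nrm2 (a *: x) = toR (a * cj a) * nrm2 x.
Proof. by rewrite /nrm2 innerZl innerZr mulrA mul_cj_real toR_ofRM toR_ofR. Qed.

Lemma nrm2D x y :
  nrm2 (x + y) = nrm2 x + toR (inner x y) + toR (inner y x) + nrm2 y.
Proof. by rewrite /nrm2 innerDl !innerDr !toRD !addrA. Qed.

Lemma inner_eq0 y : (forall x, inner x y = 0) -> y = 0.
Proof. by move=> y0; apply: nrm2_eq0; rewrite /nrm2 y0 toR0. Qed.

Lemma CauchySchwarz x y : toR (inner x y * cj (inner x y)) <= nrm2 x * nrm2 y.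
Proof.
have [/nrm2_eq0 ->|y_neq0] := eqVneq (nrm2 y) 0.
  by rewrite inner0r cj0 mulr0 toR0 nrm20 mulr0.
have y_gt0 : 0 < nrm2 y by rewrite lt_def y_neq0 nrm2_ge0.
set z := inner x y; set a := nrm2 x; set b := nrm2 y.
have bVb : ofR b^-1 * ofR b = 1 by rewrite -ofRM mulVf // ofR1.
(* expand 0 <= |x - (z / b) y|^2 *)
have := nrm2_ge0 (x - (z * ofR b^-1) *: y).
rewrite /nrm2 innerBl !innerBr !innerZl !innerZr (innerC x y) -/z.
rewrite !inner_self -/a -/b cjM cj_ofR.
have -> : ofR a - cj z * ofR b^-1 * z -
     (z * ofR b^-1 * cj z - z * ofR b^-1 * (cj z * ofR b^-1 * ofR b))
   = ofR a - z * cj z * ofR b^-1.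
  by rewrite -[cj z * ofR b^-1 * ofR b]mulrA bVb mulr1; ring.
rewrite mul_cj_real -ofRM -ofRN -ofRD toR_ofR subr_ge0.
by rewrite ler_pdivrMr // toR_ofR.
Qed.

Lemma vnorm_le1 x : (vnorm x <= 1) = (nrm2 x <= 1).
Proof. by rewrite vnormE -[in RHS]ler_sqrt ?ler01 // sqrtr1. Qed.

Lemma vnorm_ge0 x : 0 <= vnorm x.
Proof. exact: sqrtr_ge0. Qed.

Lemma vnorm_gt0 x : x != 0 -> 0 < vnorm x.
Proof.
move=> x_neq0; rewrite vnormE sqrtr_gt0 lt_def nrm2_ge0 andbT.
by apply: contra x_neq0 => /eqP/nrm2_eq0 ->.
Qed.

Lemma vnorm_ofRZ a x : 0 <= a -> vnorm (ofR a *: x) = a * vnorm x.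
Proof.
move=> a_ge0; rewrite !vnormE nrm2Z cj_ofR toR_ofRM toR_ofR.
by rewrite sqrtrM ?mulr_ge0 // -expr2 sqrtr_sqr ger0_norm.
Qed.

Lemma sum_inner_eq0_nrm2_le (I : finType) (a b : I -> vec) :
  \sum_i inner (a i) (b i) = 0 -> (forall i, nrm2 (a i + b i) <= nrm2 (a i)) ->
  forall i, b i = 0.
Proof.
move=> sum0 le_ab.
have cross_le i : toR (inner (a i) (b i)) + toR (inner (b i) (a i)) + nrm2 (b i) <= 0.
  by have := le_ab i; rewrite nrm2D; lra.
have cross0 : \sum_i (toR (inner (a i) (b i)) + toR (inner (b i) (a i))) = 0.
  rewrite big_split /= -!toR_sum.
  by rewrite (eq_bigr _ (fun i _ => innerC (a i) (b i))) -cj_sum sum0 cj0 toR0 addr0.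
have sum_le0 : \sum_i nrm2 (b i) <= 0.
  have := sumr_le0 (index_enum I) (P := predT) (fun i _ => cross_le i).
  by rewrite big_split /= cross0 add0r.
have sum_nrm2_0 : \sum_i nrm2 (b i) = 0.
  by apply/le_anti; rewrite sum_le0 sumr_ge0 // => j _; apply: nrm2_ge0.
by move=> i; apply/nrm2_eq0/(psumr_eq0P _ sum_nrm2_0) => // j _; apply: nrm2_ge0.
Qed.

End InnerProduct.

Definition adjmx m p (X : 'M[K]_(m, p)) : 'M[K]_(p, m) := \matrix_(i, j) cj (X j i).

Lemma adjmxM m p q (X : 'M[K]_(m, p)) (Y : 'M[K]_(p, q)) :
  adjmx (X *m Y) = adjmx Y *m adjmx X.
Proof.
apply/matrixP => i j; rewrite !mxE cj_sum; apply: eq_bigr => k _.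
by rewrite !mxE cjM mulrC.
Qed.

Lemma adjmx1 m : adjmx (1%:M : 'M[K]_m) = 1%:M.
Proof. by apply/matrixP => i j; rewrite !mxE eq_sym; case: (i == j); rewrite ?cj1 ?cj0. Qed.

Section Frames.
Variables n N : nat.
Local Notation vec := (vec K n).
Local Notation fseq := (fseq K n N).
Local Notation inner := (@inner K cj n).
Local Notation vnorm := (@vnorm R K cj toR n).
Local Notation opnorm := (@opnorm R K cj toR n).
Local Notation analysis := (@analysis K cj n N).
Local Notation synthesis := (@synthesis K n N).

Lemma adjmx_synthesis (g : fseq) : adjmx (synthesis g) = analysis g.
Proof. by apply/matrixP => i j; rewrite !mxE. Qed.

Lemma adjmx_analysis (g : fseq) : adjmx (analysis g) = synthesis g.
Proof. by apply/matrixP => i j; rewrite !mxE cjK. Qed.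

Lemma analysis_mulE (g : fseq) (x : vec) i : (analysis g *m x) i 0 = inner x (g i).
Proof. by rewrite mxE /inner; apply: eq_bigr => k _; rewrite mxE mulrC. Qed.

Lemma synthesis_mul (g : fseq) (a : 'cV[K]_N) : synthesis g *m a = \sum_i a i 0 *: g i.
Proof.
apply/matrixP => k j; rewrite (ord1 j) !mxE summxE; apply: eq_bigr => i _.
by rewrite !mxE mulrC.
Qed.

Lemma synthesis_analysis (g f : fseq) (x : vec) :
  synthesis g *m (analysis f *m x) = \sum_i inner x (f i) *: g i.
Proof. by rewrite synthesis_mul; apply: eq_bigr => i _; rewrite analysis_mulE. Qed.

Lemma mulmx_eq0 m (A : 'M[K]_(m, n)) : (forall x : vec, A *m x = 0) -> A = 0.
Proof.
move=> A0; apply/matrixP => i j.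
have := congr1 (fun B : 'M_(m, 1) => B i 0) (A0 (delta_mx j 0)).
by rewrite -colE !mxE.
Qed.

Lemma opnorm_le (A : 'M[K]_n) b :
  (forall x : vec, nrm2 x <= 1 -> vnorm (A *m x) <= b) -> opnorm A <= b.
Proof.
move=> A_le; apply: ge_sup.
  by exists (vnorm (A *m 0)); exists 0; rewrite //= vnorm_le1 nrm20 ler01.
by move=> _ [x x_le1 <-]; apply: A_le; rewrite -vnorm_le1.
Qed.

Lemma le_opnorm (A : 'M[K]_n) b x :
  (forall y : vec, nrm2 y <= 1 -> vnorm (A *m y) <= b) ->
  nrm2 x <= 1 -> vnorm (A *m x) <= opnorm A.
Proof.
move=> A_le x_le1; apply: ub_le_sup.
  by exists b => _ [y y_le1 <-]; apply: A_le; rewrite -vnorm_le1.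
by exists x; rewrite //= vnorm_le1.
Qed.

Lemma dual_sub_coef0 (f g1 g2 : fseq) :
  is_dual cj f g1 -> is_dual cj f g2 ->
  forall x, \sum_i inner x (g1 i - g2 i) *: f i = 0.
Proof.
move=> [_ dual1] [_ dual2] x; under eq_bigr do rewrite innerBr scalerBl.
by rewrite sumrB -(proj2 (dual1 x)) -(proj2 (dual2 x)) subrr.
Qed.

Lemma lin_indep_setC_coef0 (f : fseq) (A : {set 'I_N}) (a : 'I_N -> K) :
  (forall x, in_span f A x -> in_span f (~: A) x -> x = 0) ->
  lin_indep f (~: A) ->
  \sum_i a i *: f i = 0 -> forall i, i \notin A -> a i = 0.
Proof.
move=> disjoint indep sum0 i iNA.
have sumA : \sum_(j in A) a j *: f j = - \sum_(j in ~: A) a j *: f j.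
  apply/eqP; rewrite -addr_eq0; apply/eqP.
  rewrite -[RHS]sum0 [RHS](bigID (mem A)) /=; congr (_ + _).
  by apply: eq_bigl => j; rewrite inE.
have sumA0 : \sum_(j in A) a j *: f j = 0.
  apply: disjoint; first by exists a.
  exists (fun j => - a j); rewrite sumA -sumrN.
  by apply: eq_bigr => j _; rewrite scaleNr.
apply: (indep a); last by rewrite inE.
by apply/eqP; rewrite -oppr_eq0 -sumA sumA0.
Qed.

Variable f : fseq.
Hypothesis f_frame : is_frame f.
Local Notation S := (frame_op cj f).
Local Notation h := (canonical_dual cj f).

Lemma frame_neq0 : (0 < n)%N -> exists i, f i != 0.
Proof.
move=> n_gt0; pose e : vec := delta_mx (Ordinal n_gt0) 0.
have e_neq0 : e != 0.
  by apply/eqP => /matrixP/(_ (Ordinal n_gt0) 0)/eqP; rewrite !mxE eqxx oner_eq0.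
case: (pickP (fun i => f i != 0)) => [i fi_neq0|f0]; first by exists i.
have [a e_span] := f_frame e; move: e_neq0; rewrite e_span big1 ?eqxx // => i _.
by move/negbFE/eqP: (f0 i) => ->; rewrite scaler0.
Qed.

Lemma frame_op_inj (x : vec) : S *m x = 0 -> x = 0.
Proof.
move=> Sx0.
have inner_f0 i : inner x (f i) = 0.
  have : inner (S *m x) x = 0 by rewrite Sx0 inner0l.
  rewrite /frame_op -mulmxA synthesis_analysis inner_suml.
  under eq_bigr do rewrite innerZl (innerC x (f _)).
  move=> /(congr1 toR); rewrite toR_sum toR0 => /psumr_eq0P eq0.
  by apply: toR_mul_cj_eq0; apply: eq0 => // j _; apply: toR_mul_cj_ge0.
apply: inner_eq0 => y; have [a ->] := f_frame y.
rewrite inner_suml big1 // => i _.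
by rewrite innerZl -[inner _ x]cjK -innerC inner_f0 cj0 mulr0.
Qed.

Lemma frame_op_unit : S \in unitmx.
Proof.
rewrite -unitmx_tr -row_free_unit -kermx_eq0; apply/eqP/row_matrixP => i.
rewrite row0; set v := row i _.
have vS0 : v *m S^T = 0 by apply/sub_kermxP; apply: row_sub.
have : S *m v^T = 0 by rewrite -[S]trmxK -trmx_mul vS0 trmx0.
by move/frame_op_inj => v0; rewrite -[v]trmxK v0 trmx0.
Qed.

Lemma frame_op_canonical_dual i : S *m h i = f i.
Proof. by rewrite /canonical_dual mulKVmx // frame_op_unit. Qed.

Lemma adjmx_invmx_frame_op : adjmx (invmx S) = invmx S.
Proof.
have adjS : adjmx S = S by rewrite /frame_op adjmxM adjmx_analysis adjmx_synthesis.
have adjVS : adjmx (invmx S) *m S = 1%:M.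
  by rewrite -{2}adjS -adjmxM mulmxV ?frame_op_unit // adjmx1.
by rewrite -[adjmx _]mulmx1 -(mulmxV frame_op_unit) mulmxA adjVS mul1mx.
Qed.

Lemma synthesis_canonical_dual : synthesis h = invmx S *m synthesis f.
Proof. by apply/matrixP => k i; rewrite !mxE; apply: eq_bigr => j _; rewrite !mxE. Qed.

Lemma analysis_canonical_dual : analysis h = analysis f *m invmx S.
Proof.
by rewrite -adjmx_synthesis synthesis_canonical_dual adjmxM adjmx_invmx_frame_op adjmx_synthesis.
Qed.

Lemma canonical_dual_is_dual : is_dual cj f h.
Proof.
have reconstr x : x = \sum_i inner x (f i) *: h i.
  rewrite -synthesis_analysis synthesis_canonical_dual -mulmxA (mulmxA (synthesis f)).
  by rewrite mulKmx // frame_op_unit.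
split; last split => //.
  move=> x; exists (fun i => inner x (f i)); rewrite {1}(reconstr x).
  by apply: eq_bigl => i; rewrite inE.
rewrite -synthesis_analysis analysis_canonical_dual -mulmxA mulmxA.
by rewrite mulKVmx // frame_op_unit.
Qed.

Lemma sum_inner_canonical_dual_eq0 (u : fseq) :
  (forall x, \sum_i inner x (u i) *: f i = 0) -> \sum_i inner (h i) (u i) = 0.
Proof.
move=> coef0.
have synth_u0 : synthesis f *m analysis u = 0.
  by apply: mulmx_eq0 => x; rewrite -mulmxA synthesis_analysis coef0.
have -> : \sum_i inner (h i) (u i) = \tr (analysis u *m synthesis h).
  apply: eq_bigr => i _; rewrite !mxE; apply: eq_bigr => k _.
  by rewrite !mxE mulrC.
by rewrite synthesis_canonical_dual mulmxA mxtrace_mulC mulmxA synth_u0 mul0mx mxtrace0.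
Qed.

Lemma coef_eq0_N_le1 (u : fseq) : (N <= 1)%N -> (0 < n)%N ->
  (forall x, \sum_i inner x (u i) *: f i = 0) -> forall i, u i = 0.
Proof.
move=> N_le1 n_gt0 coef0 i.
have ord_eq (j k : 'I_N) : j = k by apply: ord_inj; move: (ltn_ord j) (ltn_ord k); lia.
have [i0 fi0_neq0] := frame_neq0 n_gt0.
rewrite (ord_eq i i0); apply: inner_eq0 => x.
have := coef0 x; rewrite (bigD1 i0) //= big1 => [|j]; last by rewrite (ord_eq j i0) eqxx.
by rewrite addr0 => /eqP; rewrite scaler_eq0 (negbTE fi0_neq0) orbF => /eqP.
Qed.

Variable p : 'I_N -> R.
Hypothesis p_prob : prob_seq p.
Hypothesis p_compl_neq0 : forall i, \sum_j p j - p i != 0.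
Local Notation q := (weight n p).
Local Notation dmp1 g := (dmp cj toR ofR p 1 f g).

Lemma weight_ge0 i : 0 <= q i.
Proof.
rewrite /weight; case: p_prob => p01 ->.
by rewrite !mulr_ge0 ?invr_ge0 ?subr_ge0 //; case/andP: (p01 i).
Qed.

Lemma weight_gt0 i : (0 < n)%N -> (1 < N)%N -> 0 < q i.
Proof.
move=> n_gt0 N_gt1; have := p_compl_neq0 i; rewrite /weight; case: p_prob => p01 ->.
move=> compl_neq0; rewrite !mulr_gt0 ?invr_gt0 ?ltr0n //; last by lia.
by rewrite lt_def compl_neq0 subr_ge0; case/andP: (p01 i).
Qed.

Lemma Dmat_mulE L (a : 'cV[K]_N) j :
  (Dmat ofR n p L *m a) j 0 = (if j \in L then ofR (q j) else 0) * a j 0.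
Proof.
rewrite mxE (bigD1 j) //= big1 => [|k k_neq_j]; rewrite !mxE; first by rewrite eqxx addr0.
by rewrite eq_sym (negbTE k_neq_j) mul0r.
Qed.

Lemma erasure1_mulE (g : fseq) i (x : vec) :
  synthesis g *m Dmat ofR n p [set i] *m analysis f *m x
  = (ofR (q i) * inner x (f i)) *: g i.
Proof.
rewrite -!mulmxA synthesis_mul (bigD1 i) //= big1 => [|j j_neq_i];
  rewrite Dmat_mulE ?inE ?eqxx ?(negbTE j_neq_i) ?analysis_mulE ?addr0 //.
by rewrite mul0r scale0r.
Qed.

Lemma opnorm_erasure1 (g : fseq) i :
  opnorm (synthesis g *m Dmat ofR n p [set i] *m analysis f)
  = q i * vnorm (f i) * vnorm (g i).
Proof.
have bound x : nrm2 x <= 1 ->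
    vnorm (synthesis g *m Dmat ofR n p [set i] *m analysis f *m x)
    <= q i * vnorm (f i) * vnorm (g i).
  move=> x_le1; rewrite erasure1_mulE; move: (weight_ge0 i); move: (q i) => w w_ge0.
  set z := inner x (f i).
  have qz : ofR w * z * cj (ofR w * z) = ofR (w ^+ 2) * (z * cj z).
    by rewrite cjM cj_ofR expr2 ofRM; ring.
  rewrite vnormE nrm2Z qz toR_ofRM.
  rewrite -[X in _ <= X]ger0_norm ?mulr_ge0 ?vnorm_ge0 //.
  rewrite -sqrtr_sqr ler_sqrt ?sqr_ge0 // !exprMn !vnormE !sqr_sqrtr ?nrm2_ge0 //.
  rewrite ler_wpM2r ?nrm2_ge0 // ler_wpM2l ?sqr_ge0 //.
  apply: le_trans (CauchySchwarz x (f i)) _.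
  by rewrite -[X in _ <= X]mul1r ler_wpM2r ?nrm2_ge0.
apply/le_anti; rewrite opnorm_le //=.
have [fi0|fi_neq0] := eqVneq (f i) 0.
  rewrite fi0 vnormE nrm20 sqrtr0 mulr0 mul0r.
  by apply: le_trans (le_opnorm (x := 0) bound _); [apply: vnorm_ge0 | rewrite nrm20 ler01].
set r := vnorm (f i); have r_gt0 : 0 < r := vnorm_gt0 fi_neq0.
have nrm2_fi : nrm2 (f i) = r ^+ 2 by rewrite /r vnormE sqr_sqrtr ?nrm2_ge0.
have rVr2 : r^-1 * r ^+ 2 = r by rewrite expr2 mulKf // gt_eqF.
have x_le1 : nrm2 (ofR r^-1 *: f i) <= 1.
  by rewrite nrm2Z cj_ofR toR_ofRM toR_ofR nrm2_fi -mulrA rVr2 mulVf ?gt_eqF.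
apply: le_trans (le_opnorm bound x_le1).
rewrite erasure1_mulE innerZl inner_self nrm2_fi -!ofRM rVr2.
by rewrite (vnorm_ofRZ _ (mulr_ge0 (weight_ge0 i) (ltW r_gt0))).
Qed.

Lemma dmp1E (g : fseq) : dmp1 g = \big[Num.max/0]_i (q i * vnorm (f i) * vnorm (g i)).
Proof.
apply/le_anti/andP; split.
  apply: bigmax_le => [|_ /cards1P[i ->]]; first exact: bigmax_ge_id.
  by rewrite opnorm_erasure1; apply: (le_bigmax _ (fun i => q i * vnorm (f i) * vnorm (g i))).
apply: bigmax_le => [|i _]; first exact: bigmax_ge_id.
rewrite -opnorm_erasure1 /dmp.
apply: (@le_bigmax_cond _ _ _ _ [set i] _
  (fun L => opnorm (synthesis g *m Dmat ofR n p L *m analysis f))).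
by rewrite cards1.
Qed.

Section OptimalDual.
Variable c : R.
Local Notation cf i := (q i * vnorm (f i) * vnorm (h i)).
Local Notation rho1 := [set i | cf i == c].
Hypothesis c_max : c = \big[Num.max/0]_i cf i.
Hypothesis span_rho_disjoint :
  forall x, in_span f rho1 x -> in_span f (~: rho1) x -> x = 0.
Hypothesis indep_rho2 : lin_indep f (~: rho1).

Lemma canonical_dual_dmp1_min g : is_dual cj f g -> dmp1 g <= dmp1 h -> g = h.
Proof.
move=> g_dual le_gh; pose u i := g i - h i.
have coef0 := dual_sub_coef0 g_dual canonical_dual_is_dual.
suff u0 i : u i = 0 by apply: boolp.funext => i; apply/subr0_eq/u0.
have [n0|n_gt0] := posnP n.
  by apply/matrixP => -[k k_lt_n]; exfalso; rewrite n0 in k_lt_n.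
have [N_le1|N_gt1] := leqP N 1; first exact: coef_eq0_N_le1 N_le1 n_gt0 coef0 i.
have c_gt0 : 0 < c.
  have [i0 fi0_neq0] := frame_neq0 n_gt0.
  have hi0_neq0 : h i0 != 0.
    by apply: contraNneq fi0_neq0 => hi0; rewrite -frame_op_canonical_dual hi0 mulmx0.
  rewrite c_max; apply: lt_le_trans (le_bigmax _ (fun i => cf i) i0).
  by rewrite mulr_gt0 ?vnorm_gt0 // mulr_gt0 ?vnorm_gt0 // weight_gt0.
have dmp1_h : dmp1 h = c by rewrite dmp1E c_max.
have le_nrm2 j : nrm2 (h j + u j) <= nrm2 (h j).
  rewrite /u addrC subrK.
  have [j_rho1|j_rho2] := boolP (j \in rho1); last first.
    suff uj0 : u j = 0 by rewrite -[g j](subrK (h j)) -/(u j) uj0 add0r.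
    apply: inner_eq0 => x.
    exact: lin_indep_setC_coef0 span_rho_disjoint indep_rho2 (coef0 x) j j_rho2.
  move: j_rho1; rewrite inE => /eqP cf_j.
  have qf_gt0 : 0 < q j * vnorm (f j).
    rewrite lt_def mulr_ge0 ?weight_ge0 ?vnorm_ge0 // andbT.
    by apply: contraTneq c_gt0 => qf0; rewrite -cf_j qf0 mul0r ltxx.
  have : q j * vnorm (f j) * vnorm (g j) <= q j * vnorm (f j) * vnorm (h j).
    rewrite cf_j -dmp1_h; apply: le_trans le_gh; rewrite dmp1E.
    exact: (le_bigmax _ (fun i => q i * vnorm (f i) * vnorm (g i))).
  by rewrite ler_pM2l // !vnormE ler_sqrt ?nrm2_ge0.
exact: sum_inner_eq0_nrm2_le (sum_inner_canonical_dual_eq0 coef0) le_nrm2 i.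
Qed.

Lemma dmp1_canonical_dual_le g : is_dual cj f g -> dmp1 h <= dmp1 g.
Proof.
move=> g_dual; have [//|lt_gh] := leP (dmp1 h) (dmp1 g).
have g_eq_h := canonical_dual_dmp1_min g_dual (ltW lt_gh).
by rewrite g_eq_h ltxx in lt_gh.
Qed.

Lemma inf_dmp1_duals : inf [set dmp1 g | g in [set g | is_dual cj f g]]%classic = dmp1 h.
Proof.
have h_in : [set dmp1 g | g in [set g | is_dual cj f g]]%classic (dmp1 h).
  by exists h => //; apply: canonical_dual_is_dual.
apply/le_anti/andP; split.
  apply: (ge_inf _ h_in); exists 0 => _ [g _ <-]; exact: bigmax_ge_id.
apply: lb_le_inf; first by exists (dmp1 h).
by move=> _ [g g_dual <-]; apply: dmp1_canonical_dual_le.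
Qed.

Lemma opt_dual1_iff g : opt_dual cj toR ofR p 1 f g <-> g = h.
Proof.
split=> [[g_dual dmp1_g] | ->].
  by apply: canonical_dual_dmp1_min g_dual _; rewrite dmp1_g /= inf_dmp1_duals.
by split; [apply: canonical_dual_is_dual | rewrite /= inf_dmp1_duals].
Qed.

Lemma opt_dual_iff m : (0 < m)%N -> forall g, opt_dual cj toR ofR p m f g <-> g = h.
Proof.
elim: m => [//|[|m] IH] _; first exact: opt_dual1_iff.
have opt_eq := IH isT.
have dmp_set : [set dmp cj toR ofR p m.+2 f g' | g' in
                  [set g' | opt_dual cj toR ofR p m.+1 f g']]%classic
               = [set dmp cj toR ofR p m.+2 f h]%classic.
  apply/seteqP; split=> [_ [g' /opt_eq -> <-] // | _ ->].
  by exists h => //; apply/opt_eq.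
move=> g; split=> [[/opt_eq -> _] // | ->].
by split; [apply/opt_eq | rewrite /= dmp_set inf1].
Qed.

End OptimalDual.
End Frames.

Lemma cor41_stmt_holds : cor41_stmt cj toR ofR.
Proof.
move=> n N f p _ f_frame p_prob p_compl cf c rho1 rho2 disjoint indep.
have opt_iff := opt_dual_iff f_frame p_prob p_compl erefl disjoint indep.
split; first split.
- exact/(opt_iff 1%N isT).
- by move=> g /(opt_iff 1%N isT).
- by move=> m /andP[m_gt0 _]; apply/opt_iff.
Qed.

End ScalarField.

Local Open Scope complex_scope.

Section ComplexScalars.
Variable R : realType.
Implicit Types (x y : R[i]) (a : R).

Lemma ReD x y : Re (x + y) = Re x + Re y.
Proof. by case: x => a b; case: y => c d; simpc. Qed.

Lemma Re_realM a x : Re (a%:C * x) = a * Re x.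
Proof. by case: x => b c; simpc. Qed.

Lemma mulcJ_real x : x * x^* = (Re (x * x^*))%:C.
Proof.
case: x => a b; simpc; apply/eqP; rewrite eq_complex /=.
by apply/andP; split; apply/eqP; ring.
Qed.

Lemma Re_mulcJ_ge0 x : 0 <= Re (x * x^*).
Proof. by case: x => a b; simpc => /=; nra. Qed.

Lemma Re_mulcJ_eq0 x : Re (x * x^*) = 0 -> x = 0.
Proof.
case: x => a b; simpc => /= ab0.
have a0 : a = 0 by nra.
have b0 : b = 0 by nra.
by rewrite a0 b0.
Qed.

End ComplexScalars.

Theorem corollary4p1 :
  (forall R : realType,
     cor41_stmt (K := R) id id id) /\
  (forall R : realType,
     cor41_stmt (K := R[i]) (@conjc R) (@Re R) (fun r : R => r%:C)).
Proof.
split=> R.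
  apply: cor41_stmt_holds => // [x | x /eqP]; first by rewrite -expr2 sqr_ge0.
  by rewrite mulf_eq0 orbb => /eqP.
apply: cor41_stmt_holds.
- exact: rmorphD.
- exact: rmorphM.
- exact: conjcK.
- exact: rmorphD.
- exact: rmorphM.
- by [].
- exact: conjc_real.
- exact: ReD.
- by [].
- exact: Re_realM.
- exact: mulcJ_real.
- exact: Re_mulcJ_ge0.
- exact: Re_mulcJ_eq0.
Qed.
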